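(* Let $R$ and $S$ be finite fields. If $\Gamma(Tr(R))\cong\Gamma(Tr(S))$ as graphs, then $R\cong S$.
   Context: For a noncommutative ring $A$ with identity and center $Z(A)$, the commuting graph $\Gamma(A)$ is the simple graph with vertex set $A\setminus Z(A)$, in which two distinct vertices $a,b$ are adjacent iff $ab=ba$. $Tr(R)$ denotes the ring of all $2\times 2$ upper triangular matrices over $R$. *)

From HB Require Import structures.
From mathcomp Require Import all_boot all_order all_algebra.
Set Implicit Arguments. Unset Strict Implicit. Unset Printing Implicit Defensive.
Import GRing.Theory.
Local Open Scope ring_scope.

(* Tr(R): the 2x2 upper triangular matrices over R, as a subset of 'M[R]_2
   (closed under +, *, containing 1: a subring). *)
Definition upper2 (R : finFieldType) (A : 'M[R]_2) : bool :=
  A ord_max ord0 == 0.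

Definition tr_central (R : finFieldType) (A : 'M[R]_2) : bool :=
  upper2 A && [forall B : 'M[R]_2, upper2 B ==> (A *m B == B *m A)].

Definition trVert (R : finFieldType) :=
  {A : 'M[R]_2 | upper2 A && ~~ tr_central A}.

Definition trAdj (R : finFieldType) (a b : trVert R) : bool :=
  (a != b) && (val a *m val b == val b *m val a).

Definition comm_graph_iso (R S : finFieldType) : Prop :=
  exists f : trVert R -> trVert S,
    bijective f /\ forall a b, trAdj (f a) (f b) = trAdj a b.

From HB Require Import structures.
From mathcomp Require Import all_boot all_order all_algebra.
From mathcomp Require Import all_fingroup all_solvable all_field zify.
Set Implicit Arguments. Unset Strict Implicit. Unset Printing Implicit Defensive.
Import GRing.Theory.
Local Open Scope ring_scope.

(* The commuting graph of Tr(F_q) has q^3 - q vertices: there are q^3 upper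
   triangular matrices, of which exactly the q scalar ones are central.  Since
   q |-> q^3 - q is injective on positive integers, isomorphic graphs force
   #|R| = #|S|.  Finite fields of equal order are isomorphic: a generator a of
   the cyclic group R^* generates R over F_p, its minimal polynomial divides
   X^q - X and therefore has a root b in S, and a |-> b extends to a ring
   morphism R -> S, which is injective and hence bijective. *)

Lemma horner_alg_factor (F : comNzRingType) (A B : algType F) (a : A) (b : B) :
    (forall x : A, exists g, horner_alg a g = x) ->
    (forall g, horner_alg a g = 0 -> horner_alg b g = 0) ->
  exists f : {rmorphism A -> B}, forall g, f (horner_alg a g) = horner_alg b g.
Proof.
move=> surj ker.
have preP (x : A) : exists g, horner_alg a g == x by have [g <-] := surj x; exists g.
pose f (x : A) := horner_alg b (xchoose (preP x)).
have fE g : f (horner_alg a g) = horner_alg b g.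
  apply/eqP; rewrite -subr_eq0 -rmorphB; apply/eqP/ker.
  by rewrite rmorphB /= (eqP (xchooseP (preP _))) subrr.
have fD : nmod_morphism f.
  split=> [|x y]; first by rewrite -(rmorph0 (horner_alg a)) fE rmorph0.
  have [[g <-] [h <-]] := (surj x, surj y).
  by rewrite -rmorphD !fE rmorphD.
have fM : monoid_morphism f.
  split=> [|x y]; first by rewrite -(rmorph1 (horner_alg a)) fE rmorph1.
  have [[g <-] [h <-]] := (surj x, surj y).
  by rewrite -rmorphM !fE rmorphM.
pose fN := GRing.isNmodMorphism.Build _ _ f fD.
pose fR := GRing.isMonoidMorphism.Build _ _ f fM.
pose fRM : {rmorphism A -> B} := HB.pack f fN fR.
by exists fRM.
Qed.

Lemma horner_alg_kernel (F : fieldType) (L : fieldExtType F) (a : L) :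
  exists2 m : {poly F}, (1 < size m)%N & forall g, (horner_alg a g == 0) = (m %| g).
Proof.
have /polyOver1P[m Dm] := minPolyOver 1 a.
exists m.
  by rewrite -(size_map_inj_poly (fmorph_inj (in_alg L))) ?rmorph0 // -Dm size_minPoly.
move=> g; rewrite [horner_alg _ _]/= -/(root _ a).
apply/idP/idP => [rg|].
  rewrite -(dvdp_map (in_alg L)) -Dm minPoly_dvdp //.
  by apply/polyOver1P; exists g.
rewrite -(dvdp_map (in_alg L)) -Dm => /dvdpP[q ->].
by rewrite rootM root_minPoly orbT.
Qed.

Section PrimeCharFinField.
Variables (F : finFieldType) (p : nat) (pF : p \in [pchar F]).
Local Notation Fp := (pPrimeCharType pF).

Lemma pPrimeChar_horner_surj :
  exists a : Fp, forall x : Fp, exists g, horner_alg a g = x.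
Proof.
have [u defU] := cyclicP (field_unit_group_cyclic [set: {unit F}]%G).
exists (FinRing.uval u) => x; have [->|nz_x] := eqVneq x 0.
  by exists 0; rewrite rmorph0.
have : finField_unit nz_x \in <[u]>%g by rewrite -defU inE.
case/cycleP=> k defx; exists 'X^k.
by rewrite rmorphXn /= horner_algX -FinRing.val_unitX -defx.
Qed.

Lemma pPrimeChar_root_exists (m : {poly 'F_p}) :
  (1 < size m)%N -> (m %| 'X^#|F| - 'X)%R -> exists b : Fp, horner_alg b m = 0.
Proof.
move=> m_gt1 dv_m; have : (map_poly (in_alg Fp) m %| \prod_(y : Fp) ('X - y%:P))%R.
  rewrite -finField_genPoly.
  have -> : 'X^#|Fp| - 'X = map_poly (in_alg Fp) ('X^#|F| - 'X).
    by rewrite rmorphB rmorphXn /= map_polyX.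
  by rewrite dvdp_map.
case/dvdp_prod_XsubC => ms; case: (mask ms _) => [|y ys].
  rewrite big_nil => /eqp_size; rewrite size_polyC oner_eq0 size_map_poly.
  by move=> m1; rewrite m1 in m_gt1.
move=> /eqp_root rt; exists y; apply/eqP; rewrite -/(root _ y) rt.
by rewrite big_cons rootM root_XsubC eqxx.
Qed.

End PrimeCharFinField.

Lemma finField_iso_of_card (R S : finFieldType) :
  #|R| = #|S| -> exists f : {rmorphism R -> S}, bijective f.
Proof.
move=> cardRS; have [p p_pr pR] := finPcharP R.
have pS : p \in [pchar S].
  apply: (@card_finPcharP _ p (logn p #|R|)) => //.
  by rewrite -cardRS; exact: card_pprimeChar pR.
have [a surj_a] := pPrimeChar_horner_surj pR.
have [m m_gt1 kerE] := horner_alg_kernel a.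
have dv_m : (m %| 'X^#|S| - 'X)%R.
  rewrite -kerE rmorphB rmorphXn /= horner_algX -cardRS.
  by rewrite (expf_card (a : pPrimeCharType pR)) subrr.
have [b mb0] := pPrimeChar_root_exists pS m_gt1 dv_m.
have [f _] : exists f : {rmorphism _ -> _}, forall g, f (horner_alg a g) = horner_alg b g.
  apply: horner_alg_factor => // g /eqP; rewrite kerE => /dvdpP[q ->].
  by rewrite rmorphM /= mb0 mulr0.
exists f; apply: inj_card_bij; first exact: fmorph_inj.
by rewrite cardRS.
Qed.

Lemma ord2P (i : 'I_2) : i = ord0 \/ i = ord_max.
Proof. by case: i => [[|[|//]] lti]; [left|right]; apply: val_inj. Qed.

Section TriangularCounting.
Variable R : finFieldType.

Definition upper2_mx (t : R * R * R) : 'M[R]_2 :=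
  \matrix_(i, j)
    if i == ord0 then (if j == ord0 then t.1.1 else t.1.2)
    else (if j == ord0 then 0 else t.2).

Lemma upper2_mx_inj : injective upper2_mx.
Proof.
move=> [[x y] z] [[x' y'] z'] /matrixP e.
move: (e ord0 ord0) (e ord0 ord_max) (e ord_max ord_max).
by rewrite !mxE /= => -> -> ->.
Qed.

Lemma upper2E (A : 'M[R]_2) : upper2 A = (A \in codom upper2_mx).
Proof.
apply/idP/codomP => [/eqP A10 | [t ->]]; last by rewrite /upper2 mxE.
exists (A ord0 ord0, A ord0 ord_max, A ord_max ord_max).
by apply/matrixP => i j; rewrite mxE; case: (ord2P i) => ->; case: (ord2P j) => ->.
Qed.

Lemma card_upper2 : #|[pred A : 'M[R]_2 | upper2 A]| = (#|R| ^ 3)%N.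
Proof.
rewrite (eq_card upper2E) card_codom; last exact: upper2_mx_inj.
by rewrite !card_prod -mulnA.
Qed.

Lemma tr_centralE (A : 'M[R]_2) : tr_central A = (A == (A ord0 ord0)%:M).
Proof.
apply/idP/eqP => [/andP[/eqP A10 /forallP cA] | ->]; last first.
  rewrite /tr_central /upper2 mxE mulr0n eqxx /=.
  by apply/forallP => B; apply/implyP => _; rewrite scalar_mxC.
have commE (j : 'I_2) : A *m delta_mx ord0 j = delta_mx ord0 j *m A.
  by apply/eqP; apply: (implyP (cA _)); rewrite /upper2 mxE.
move: (commE ord0) (commE ord_max).
move=> /matrixP/(_ ord0 ord_max) + /matrixP/(_ ord0 ord_max).
rewrite !mxE !big_ord_recl !big_ord0 !mxE /=.
have -> : lift ord0 ord0 = ord_max :> 'I_2 by apply: val_inj.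
rewrite !(mulr0, mul0r, mulr1, mul1r, addr0, add0r) => A01 A11.
apply/matrixP => i j; rewrite mxE.
by case: (ord2P i) => ->; case: (ord2P j) => ->; rewrite /= ?mulr1n ?mulr0n.
Qed.

Lemma card_tr_central : #|[pred A : 'M[R]_2 | tr_central A]| = #|R|.
Proof.
have scalar_inj : injective (fun a : R => a%:M : 'M[R]_2).
  by move=> a b /matrixP/(_ ord0 ord0); rewrite !mxE eqxx !mulr1n.
rewrite -(card_codom scalar_inj); apply: eq_card => A; rewrite inE tr_centralE.
apply/eqP/codomP => [-> | [a ->]]; first by exists (A ord0 ord0).
by rewrite mxE eqxx mulr1n.
Qed.

Lemma card_trVert : #|{: trVert R}| = (#|R| ^ 3 - #|R|)%N.
Proof.
set upper := [pred A : 'M[R]_2 | upper2 A].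
set central := [pred A : 'M[R]_2 | tr_central A].
have centralI : [predI upper & central] =i central.
  by move=> A; rewrite !inE andb_idl // => /andP[].
rewrite card_sig -card_upper2 -card_tr_central -(cardID central upper).
rewrite (eq_card centralI) addKn.
by apply: eq_card => A; rewrite !inE andbC.
Qed.

End TriangularCounting.

Section CubeMinusSelf.
Local Open Scope nat_scope.

Lemma ltn_cube_sub m n : 0 < m -> m < n -> m ^ 3 - m < n ^ 3 - n.
Proof.
move=> m_gt0 lt_mn; rewrite !expnS expn0 !muln1.
have le_mn : m <= n by exact: ltnW.
have : m * m * m <= m * n * n by apply: leq_mul => //; apply: leq_mul.
have : (m + 1) * n * n <= n * n * n.
  by apply: leq_mul => //; apply: leq_mul; rewrite ?addn1.
nia.
Qed.

Lemma cube_sub_inj m n : 0 < m -> 0 < n -> m ^ 3 - m = n ^ 3 - n -> m = n.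
Proof.
move=> m_gt0 n_gt0 e; case: (ltngtP m n) => // [lt_mn | lt_nm].
  by have := ltn_cube_sub m_gt0 lt_mn; rewrite e ltnn.
by have := ltn_cube_sub n_gt0 lt_nm; rewrite e ltnn.
Qed.

End CubeMinusSelf.

Theorem mainTheorem6 (R S : finFieldType) :
  comm_graph_iso R S ->
  exists f : {rmorphism R -> S}, bijective f.
Proof.
case=> f [f_bij _]; apply: finField_iso_of_card.
have := bij_eq_card f_bij; rewrite !card_trVert.
by apply: cube_sub_inj; apply: ltnW; apply: finNzRing_gt1.
Qed.
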